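(* Let $G\curvearrowright X$ be a Borel action of a countable group on a standard Borel space. If for every $x\in X$ the stabilizer $\mathrm{Stab}_G(x)$ is uniformly coamenable in $G$, then the orbit equivalence relation $E_G^X$ is Borel amenable.
   Context: For a set $A$, $\mathrm{Prob}(A)$ is the set of nonnegative $p\in\ell^1(A)$ with $\|p\|_1=1$. For an action $G\curvearrowright Y$, $p\in\mathrm{Prob}(G)$ and $y\in Y$, $py\in\mathrm{Prob}(G\cdot y)$ denotes the pushforward of $p$ under $g\mapsto gy$. Given a finite $S\subseteq G$ and $\varepsilon>0$, an $(S,\varepsilon)$-Reiter function for $G\curvearrowright Y$ is some $p\in\mathrm{Prob}(G)$ such that $\|py-psy\|_1<\varepsilon$ for all $s\in S$ and all $y\in Y$. A subgroup $H\le G$ is uniformly coamenable if for every finite $S\subseteq G$ and every $\varepsilon>0$ the action $G\curvearrowright G/H$ has an $(S,\varepsilon)$-Reiter function. A CBER $E$ on $X$ is Borel amenable if there is a sequence $(p_i)_{i\in\mathbb N}$, each $p_i$ assigning to every $x\in X$ some $p^x_i\in\mathrm{Prob}([x]_E)$, such that for every $(x,y)\in E$ and $\varepsilon>0$, for all but finitely many $i$, $\|p_i^x-p_i^y\|_1<\varepsilon$, and such that for each $i$ the map $E\to\mathbb R$, $(x,y)\mapsto p_i^x(\{y\})$ is Borel. *)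

From HB Require Import structures.
From mathcomp Require Import all_boot all_order all_algebra.
From mathcomp Require Import all_classical all_reals all_analysis.
From mathcomp Require Import Rstruct Rstruct_topology.
From Stdlib Require Import Rdefinitions.

Set Implicit Arguments.
Unset Strict Implicit.
Unset Printing Implicit Defensive.

Import Order.TTheory GRing.Theory Num.Theory.
Local Open Scope classical_set_scope.
Local Open Scope ring_scope.

Definition RR : realType := Rdefinitions.R.

Definition ell1_dist (T : choiceType) (p q : T -> \bar RR) : \bar RR :=
  (\esum_(t in [set: T]) `|p t - q t|)%E.

Definition is_prob (A : choiceType) (p : A -> RR) : Prop :=
  (forall a, 0 <= p a) /\ (\esum_(a in [set: A]) (p a)%:E)%E = 1%E.

Definition pushforward (G : choiceType) (Y : Type) (p : G -> RR) (f : G -> Y) : Y -> \bar RR :=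
  fun y => (\esum_(g in f @^-1` [set y]) (p g)%:E)%E.

Local Open Scope group_scope.

Definition reiter_function (G : groupType) (Y : choiceType) (act : G -> Y -> Y)
    (D : set Y) (S : set G) (eps : RR) (p : G -> RR) : Prop :=
  is_prob p /\
  forall s, S s -> forall y, D y ->
    (ell1_dist (pushforward p (fun g => act g y))
               (pushforward p (fun g => act g (act s y))) < eps%:E)%E.

Definition lcoset (G : groupType) (H : set G) (a : G) : set G :=
  [set a * h | h in H].
Definition coset_space (G : groupType) (H : set G) : set (set G) :=
  range (lcoset H).
Definition coset_act (G : groupType) (g : G) (Z : set G) : set G :=
  [set g * z | z in Z].

Definition uniformly_coamenable (G : groupType) (H : set G) : Prop :=
  forall S : set G, finite_set S -> forall eps : RR, (0 < eps)%R ->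
    exists p : G -> RR,
      reiter_function (@coset_act G) (coset_space H) S eps p.

Definition stabilizer (G : groupType) (X : Type) (act : G -> X -> X) (x : X)
  : set G := [set g | act g x = x].

Definition borel_action (G : groupType) (d : measure_display)
    (X : measurableType d) (act : G -> X -> X) : Prop :=
  (forall x, act 1 x = x) /\
  (forall g h x, act (g * h) x = act g (act h x)) /\
  (forall g, measurable_fun [set: X] (act g)).

Definition standard_borel (d : measure_display) (X : measurableType d) : Prop :=
  exists f : X -> RR,
    injective f /\ measurable_fun [set: X] f /\ measurable (range f) /\
    (forall A : set X, measurable A -> measurable (f @` A)).

Definition orbit_eqrel (G : groupType) (X : Type) (act : G -> X -> X)
  : set (X * X) := [set xy | exists g, act g xy.1 = xy.2].

Local Close Scope group_scope.

(* Borel amenability of a (countable Borel) equivalence relation E on X.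
   p i x is p_i^x, a function X -> R vanishing outside [x]_E. *)
Definition borel_amenable (d : measure_display) (X : measurableType d)
    (E : set (X * X)) : Prop :=
  exists p : nat -> X -> X -> RR,
    (forall i x,
        (forall y, 0 <= p i x y) /\
        (forall y, ~ E (x, y) -> p i x y = 0) /\
        (\esum_(y in [set y | E (x, y)]) (p i x y)%:E)%E = 1%E) /\
    (forall x y, E (x, y) -> forall eps : RR, 0 < eps ->
        exists N : nat, forall i : nat, leq N i ->
          (ell1_dist (fun z => (p i x z)%:E) (fun z => (p i y z)%:E) < eps%:E)%E) /\
    (forall i, measurable_fun E (fun xy : X * X => p i xy.1 xy.2)).

(* For every x, a Reiter function for G/Stab(x) pushes forward along the
   equivariant map g Stab(x) |-> g x without increasing l^1 distances, so it
   gives measures on the orbit of x that are almost invariant under a finite set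
   of group elements, uniformly along the orbit.  Such a measure can be taken
   finitely supported with rational weights, i.e. encoded by a natural number.
   For the i-th level, p_i^x is the pushforward to the orbit of x of the first
   encoded measure that is (1/(i+1))-invariant under the first i+1 group elements
   at every point of the orbit: this choice depends only on the orbit, so for
   y = h x the measures p_i^x, p_i^y are 1/(i+1)-close once h is among those
   elements, and it is Borel because the conditions are countably many Borel
   conditions on x. *)

From mathcomp Require Import all_boot all_order all_algebra.
From mathcomp Require Import all_classical all_reals all_analysis.
From mathcomp Require Import Rstruct Rstruct_topology.
From mathcomp Require Import measurable_realfun lra.

Set Implicit Arguments.
Unset Strict Implicit.
Unset Printing Implicit Defensive.
Import Order.TTheory GRing.Theory Num.Theory.
Local Open Scope classical_set_scope.
Local Open Scope ring_scope.
Local Open Scope ereal_scope.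

Section FiniteSupport.
Variable T : choiceType.

Lemma esum_finite_support (s : seq T) (f : T -> \bar RR) :
  (forall t, 0 <= f t) -> (forall t, t \notin s -> f t = 0) ->
  \esum_(t in [set: T]) f t = \sum_(t <- undup s) f t.
Proof.
move=> f0 fs0; rewrite (esumID [set` s]) // !setTI.
rewrite [X in _ + X]esum1 ?adde0; last by move=> t /negP /fs0.
rewrite esum_fset; [|exact: finite_seq|by []].
have -> : [set` s] = [set` undup s] by apply/seteqP; split => t /=; rewrite mem_undup.
by rewrite -fsbig_seq ?undup_uniq.
Qed.

Lemma esum_dirac (A : set T) (a : T) (c : RR) : (0 <= c)%R ->
  \esum_(t in A) (c * (a == t)%:R)%:E = (c * `[< A a >]%:R)%:E.
Proof.
move=> c0; rewrite esum_mkcond (@esum_finite_support [:: a]); first last.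
- by move=> t; rewrite inE eq_sym => /negbTE ->; rewrite mulr0; case: ifP.
- by move=> t; case: ifP => // _; rewrite lee_fin mulr_ge0.
rewrite /= big_seq1 eqxx mulr1; case: (pselect (A a)) => Aa.
  by rewrite mem_set // asboolT // mulr1.
by rewrite memNset // asboolF // mulr0.
Qed.

End FiniteSupport.

Definition fibersum (T Y : choiceType) (f : T -> Y) (a : T -> \bar RR) : Y -> \bar RR :=
  fun y => \esum_(t in f @^-1` [set y]) a t.

Section Fibersum.
Variables T Y W : choiceType.

Lemma pushforwardE (p : T -> RR) (f : T -> Y) :
  pushforward p f = fibersum f (fun t => (p t)%:E).
Proof. by []. Qed.

Lemma esum_fibersum (f : T -> Y) (a : T -> \bar RR) (D : set Y) :
  (forall t, 0 <= a t) ->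
  \esum_(y in D) fibersum f a y = \esum_(t in f @^-1` D) a t.
Proof.
move=> a0; rewrite esum_esum; last by move=> *; apply: a0.
rewrite (reindex_esum (f @^-1` D) _ (fun t => (f t, t))) //; split.
- by move=> t Dt; split.
- by move=> t1 t2 _ _ [_ ->].
- by move=> [y t] [/= Dy]; rewrite /preimage /= => yt; subst y; exists t.
Qed.

Lemma fibersum_comp (f : T -> Y) (h : Y -> W) (a : T -> \bar RR) :
  (forall t, 0 <= a t) -> fibersum (h \o f) a = fibersum h (fibersum f a).
Proof. by move=> a0; apply: funext => w; rewrite /fibersum esum_fibersum. Qed.

Lemma fibersum_ge0 (f : T -> Y) (a : T -> \bar RR) y :
  (forall t, 0 <= a t) -> 0 <= fibersum f a y.
Proof. by move=> a0; apply: esum_ge0 => t _. Qed.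

Lemma lee_abs_esumB (A : set T) (a b : T -> \bar RR) :
  (forall t, 0 <= a t) -> (forall t, 0 <= b t) ->
  \esum_(t in A) a t \is a fin_num -> \esum_(t in A) b t \is a fin_num ->
  `|\esum_(t in A) a t - \esum_(t in A) b t| <= \esum_(t in A) `|a t - b t|.
Proof.
have le_sum_dist (u v : T -> \bar RR) : (forall t, 0 <= u t) -> (forall t, 0 <= v t) ->
    \esum_(t in A) u t <= \esum_(t in A) v t + \esum_(t in A) `|u t - v t|.
  move=> u0 v0; rewrite -esumD => [|t _|t _]; [|exact: v0|exact: abse_ge0].
  apply: le_esum => t _; move: (u t) (v t) (u0 t) (v0 t) => [x| |] [y| |] //=.
  - by move=> _ _; rewrite -EFinD lee_fin; have := ler_norm (x - y); lra.
  - by move=> _ _; rewrite leey.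
move=> a0 b0; have h1 := le_sum_dist a b a0 b0; have h2 := le_sum_dist b a b0 a0.
have distC t : `|b t - a t| = `|a t - b t|.
  by move: (a t) (b t) (a0 t) (b0 t) => [x| |] [y| |] //= _ _; rewrite distrC.
rewrite (eq_esum (fun t _ => distC t)) in h2.
have d0 : 0 <= \esum_(t in A) `|a t - b t| by apply: esum_ge0 => t _; exact: abse_ge0.
move: (\esum_(t in A) a t) (\esum_(t in A) b t) (\esum_(t in A) `|a t - b t|) h1 h2 d0.
move=> [x| |] [y| |] [z| |] //=.
- by rewrite !lee_fin => h1 h2 _ _ _; rewrite ler_norml; apply/andP; split; lra.
- by move=> *; rewrite leey.
Qed.

Lemma ell1_dist_fibersum_le (f : T -> Y) (a b : T -> \bar RR) :
  (forall t, 0 <= a t) -> (forall t, 0 <= b t) ->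
  (forall y, fibersum f a y \is a fin_num) -> (forall y, fibersum f b y \is a fin_num) ->
  ell1_dist (fibersum f a) (fibersum f b) <= ell1_dist a b.
Proof.
move=> a0 b0 fa fb; rewrite /ell1_dist.
apply: (@le_trans _ _ (\esum_(y in [set: Y]) fibersum f (fun t => `|a t - b t|) y)).
  by apply: le_esum => y _; apply: lee_abs_esumB; [| |exact: fa|exact: fb].
by rewrite esum_fibersum ?preimage_setT // => t; exact: abse_ge0.
Qed.

End Fibersum.

Section Ell1.
Variable T : choiceType.

Lemma ell1_dist_EFinC (a b : T -> RR) :
  ell1_dist (fun t => (a t)%:E) (fun t => (b t)%:E) =
  ell1_dist (fun t => (b t)%:E) (fun t => (a t)%:E).
Proof. by apply: eq_esum => t _; rewrite -!EFinB !abse_EFin distrC. Qed.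

Lemma ell1_dist_triangle (a b c : T -> \bar RR) : (forall t, b t \is a fin_num) ->
  ell1_dist a c <= ell1_dist a b + ell1_dist b c.
Proof.
move=> bfin; rewrite /ell1_dist -esumD => [|t _|t _]; try exact: abse_ge0.
apply: le_esum => t _.
have -> : a t - c t = (a t - b t) + (b t - c t) by rewrite addeA subeK // bfin.
exact: lee_abs_add.
Qed.

End Ell1.

Section PushforwardProb.
Variables T Y : choiceType.

Lemma pushforward_le1 (p : T -> RR) (f : T -> Y) y : is_prob p -> pushforward p f y <= 1.
Proof.
move=> [p0 <-]; rewrite (esumID (f @^-1` [set y])) ?setTI => [|t _]; last by rewrite lee_fin.
by rewrite leeDl //; apply: esum_ge0 => t _; rewrite lee_fin.
Qed.

Lemma pushforward_fin_num (p : T -> RR) (f : T -> Y) y :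
  is_prob p -> pushforward p f y \is a fin_num.
Proof.
move=> pp; rewrite ge0_fin_numE; last by apply: esum_ge0 => t _; rewrite lee_fin pp.1.
by apply: le_lt_trans (pushforward_le1 f y pp) _; rewrite ltey.
Qed.

End PushforwardProb.

Lemma ell1_dist_pushforward_comp_le (T Y W : choiceType) (p : T -> RR)
    (f1 f2 : T -> Y) (h : Y -> W) :
  is_prob p ->
  ell1_dist (pushforward p (h \o f1)) (pushforward p (h \o f2)) <=
  ell1_dist (pushforward p f1) (pushforward p f2).
Proof.
move=> pp; have p0 t : 0 <= (p t)%:E by rewrite lee_fin pp.1.
rewrite !pushforwardE (fibersum_comp f1 h) // (fibersum_comp f2 h) //.
apply: ell1_dist_fibersum_le.
- by move=> y; apply: fibersum_ge0.
- by move=> y; apply: fibersum_ge0.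
- by move=> w; rewrite -fibersum_comp // -pushforwardE; exact: pushforward_fin_num.
- by move=> w; rewrite -fibersum_comp // -pushforwardE; exact: pushforward_fin_num.
Qed.

Section CosetSpaceToOrbit.
Local Open Scope group_scope.
Variables (G : groupType) (X : choiceType) (act : G -> X -> X).
Hypothesis act1 : forall x, act 1 x = x.
Hypothesis actM : forall g h x, act (g * h) x = act g (act h x).

Lemma coset_act_lcoset (H : set G) g a : coset_act g (lcoset H a) = lcoset H (g * a).
Proof.
apply/seteqP; split => [_ [_ [h Hh <-] <-]|_ [h Hh <-]].
  by exists h => //; rewrite mulgA.
by exists (a * h); [exists h | rewrite mulgA].
Qed.

(* On cosets of Stab(x) any representative gives the same point. *)
Definition orbit_point (x : X) (C : set G) : X := act (xget 1 C) x.

Lemma orbit_point_lcoset x a : orbit_point x (lcoset (stabilizer act x) a) = act a x.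
Proof.
rewrite /orbit_point; set C := lcoset (stabilizer act x) a.
have [h hx <-] : C (xget 1 C) by apply: xgetPex; exists (a * 1), 1; rewrite ?mulg1.
by rewrite actM hx.
Qed.

Lemma ell1_dist_orbit_le_coset (p : G -> RR) x a s : is_prob p ->
  ell1_dist (pushforward p (fun g => act g (act a x)))
            (pushforward p (fun g => act g (act s (act a x)))) <=
  ell1_dist (pushforward p (fun g => coset_act g (lcoset (stabilizer act x) a)))
            (pushforward p (fun g => coset_act g (coset_act s (lcoset (stabilizer act x) a)))).
Proof.
move=> pp; have orbitE b : (fun g => act g (act b x)) =
    orbit_point x \o (fun g => coset_act g (lcoset (stabilizer act x) b)).
  by apply: funext => g /=; rewrite coset_act_lcoset orbit_point_lcoset actM.
rewrite -[act s (act a x)]actM (orbitE a) (orbitE (s * a)) -coset_act_lcoset.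
exact: ell1_dist_pushforward_comp_le.
Qed.

End CosetSpaceToOrbit.

Section FiniteMassApprox.
Variable T : choiceType.

Lemma prob_finite_mass (p : T -> RR) (eta : RR) : is_prob p -> (0 < eta)%R ->
  exists2 rs : seq T, uniq rs & (1 - eta < \sum_(t <- rs) p t)%R.
Proof.
move=> [p0 p1] eta0.
have : (1 - eta)%:E < \esum_(t in [set: T]) (p t)%:E by rewrite p1 lte_fin; lra.
move=> /ereal_sup_gt [_ [A [finA _] <-]]; rewrite fsbig_finite //= sumEFin lte_fin.
by exists (finmap.enum_fset (fset_set A)) => //; exact: finmap.fset_uniq.
Qed.

Lemma esum_prob_compl (p : T -> RR) (rs : seq T) : is_prob p -> uniq rs ->
  \esum_(t in ~` [set` rs]) (p t)%:E = (1 - \sum_(t <- rs) p t)%:E.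
Proof.
move=> [p0 p1] urs; have pE t : 0 <= (p t)%:E by rewrite lee_fin.
have := esumID [set` rs] [set: T] (fun t => (p t)%:E) (fun t _ => pE t).
rewrite !setTI p1 esum_fset ?finite_seq // -fsbig_seq // sumEFin.
have : 0 <= \esum_(t in ~` [set` rs]) (p t)%:E by apply: esum_ge0.
move: (\esum_(t in ~` [set` rs]) (p t)%:E) => [c| |] //= c0.
by move=> [->]; congr EFin; lra.
Qed.

End FiniteMassApprox.

Lemma sum_dist_normalized_le (I : Type) (s : seq I) (k b : I -> RR) (M : RR) :
  (forall i, 0 <= k i)%R -> (forall i, k i <= M * b i)%R ->
  (0 < \sum_(i <- s) k i <= M)%R ->
  (\sum_(i <- s) `|k i / \sum_(j <- s) k j - b i| <=
   (1 - (\sum_(i <- s) k i) / M) + (\sum_(i <- s) b i - (\sum_(i <- s) k i) / M))%R.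
Proof.
set K := (\sum_(i <- s) k i)%R => k0 kb /andP[K0 KM]; have M0 : (0 < M)%R by lra.
have le_dist i : (`|k i / K - b i| <= (k i / K - k i / M) + (b i - k i / M))%R.
  have kMb : (k i / M <= b i)%R by rewrite ler_pdivrMr // mulrC.
  have kMK : (k i / M <= k i / K)%R by apply: ler_wpM2l => //; rewrite lef_pV2 ?posrE.
  by rewrite ler_norml; apply/andP; split; lra.
apply: le_trans (ler_sum s (fun i _ => le_dist i)) _.
by rewrite big_split /= !sumrB -!mulr_suml -/K divff ?lt0r_neq0.
Qed.

Section EncodedMeasure.
Variables (G : groupType) (enc : G -> nat) (dec : nat -> G).
Hypothesis encK : cancel enc dec.

(* A list of pairs (n, w) encodes the probability on G giving [dec n] mass
   proportional to the integer weight w. *)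
Definition wsum (l : seq (nat * nat)) : RR := (\sum_(e <- l) (e.2)%:R)%R.
Definition lweight (l : seq (nat * nat)) (e : nat * nat) : RR := ((e.2)%:R / wsum l)%R.
Definition lmass (l : seq (nat * nat)) (g : G) : RR :=
  (\sum_(e <- l) lweight l e * (dec e.1 == g)%:R)%R.

Lemma wsum_ge0 l : (0 <= wsum l)%R.
Proof. by apply: sumr_ge0 => e _; rewrite ler0n. Qed.

Lemma lweight_ge0 l e : (0 <= lweight l e)%R.
Proof. by rewrite divr_ge0 ?ler0n ?wsum_ge0. Qed.

Lemma sum_lweight l : (0 < wsum l)%R -> (\sum_(e <- l) lweight l e = 1)%R.
Proof. by move=> l0; rewrite -mulr_suml divff ?lt0r_neq0. Qed.

Lemma lmass_ge0 l g : (0 <= lmass l g)%R.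
Proof. by apply: sumr_ge0 => e _; rewrite mulr_ge0 ?lweight_ge0 ?ler0n. Qed.

Lemma esum_lmass l (A : set G) :
  \esum_(g in A) (lmass l g)%:E = (\sum_(e <- l) lweight l e * `[< A (dec e.1) >]%:R)%R%:E.
Proof.
under eq_esum do rewrite -sumEFin.
rewrite esum_sum => [|g e _ _]; last by rewrite lee_fin mulr_ge0 ?lweight_ge0 ?ler0n.
by rewrite -sumEFin; apply: eq_bigr => e _; rewrite esum_dirac ?lweight_ge0.
Qed.

Lemma lmass_seq (rs : seq G) (k : G -> nat) g : uniq rs ->
  lmass [seq (enc t, k t) | t <- rs] g =
  if g \in rs then ((k g)%:R / wsum [seq (enc t, k t) | t <- rs])%R else 0%R.
Proof.
move=> urs; rewrite /lmass big_map; under eq_bigr do rewrite encK.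
case: ifP => grs.
  rewrite (bigD1_seq g grs urs) /= eqxx mulr1 big1 ?addr0 // => t /negbTE.
  by rewrite eq_sym => ->; rewrite mulr0.
rewrite big1_seq // => t /= trs.
by rewrite (_ : (t == g) = false) ?mulr0 //; apply: contraFF grs => /eqP <-.
Qed.

Lemma ell1_dist_lmass_seq (p : G -> RR) (rs : seq G) (k : G -> nat) :
  is_prob p -> uniq rs ->
  let l := [seq (enc t, k t) | t <- rs] in
  ell1_dist (fun g => (lmass l g)%:E) (fun g => (p g)%:E) =
  (\sum_(t <- rs) `|(k t)%:R / wsum l - p t| + (1 - \sum_(t <- rs) p t))%R%:E.
Proof.
move=> pp urs l; rewrite /ell1_dist; under eq_esum do rewrite -EFinB abse_EFin.
rewrite (esumID [set` rs]) // !setTI esum_fset; [|exact: finite_seq|by []].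
rewrite -fsbig_seq // sumEFin EFinD -esum_prob_compl //; congr (_ + _).
  by congr EFin; apply: eq_big_seq => t trs; rewrite lmass_seq ?trs.
apply: eq_esum => t /negP /negbTE trs.
by rewrite lmass_seq // trs sub0r normrN ger0_norm ?pp.1.
Qed.

Lemma lmass_approx (p : G -> RR) (delta : RR) : is_prob p -> (0 < delta)%R ->
  exists l, (0 < wsum l)%R /\
    ell1_dist (fun g => (lmass l g)%:E) (fun g => (p g)%:E) < delta%:E.
Proof.
(* Quantize p at scale M on a finite set carrying mass > 1 - eta. *)
move=> pp delta0; pose eta := (Num.min delta 1 / 5)%R.
have eta0 : (0 < eta)%R by rewrite /eta divr_gt0 // lt_min delta0 ltr01.
have eta_delta : (eta <= delta / 5)%R by rewrite ler_pM2r // ge_min lexx.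
have eta_small : (eta <= 1 / 5)%R by rewrite ler_pM2r // ge_min lexx orbT.
have [rs urs mass_rs] := prob_finite_mass pp eta0.
set P := (\sum_(t <- rs) p t)%R in mass_rs.
have P1 : (P <= 1)%R.
  have : 0 <= \esum_(t in ~` [set` rs]) (p t)%:E.
    by apply: esum_ge0 => t _; rewrite lee_fin pp.1.
  by rewrite esum_prob_compl // -/P lee_fin => ?; lra.
pose n := size rs; pose M := (Num.truncn (n%:R / eta)).+1.
have M0 : (0 < M%:R :> RR)%R by rewrite ltr0n.
have nM : (n%:R < M%:R * eta)%R by rewrite -ltr_pdivrMr //; exact: truncnS_gt.
pose k g := Num.truncn (M%:R * p g).
have kP g : ((k g)%:R <= M%:R * p g < (k g)%:R + 1)%R.
  by rewrite natr1; apply: truncn_itv; rewrite mulr_ge0 ?ler0n ?pp.1.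
pose l := [seq (enc t, k t) | t <- rs]; exists l.
have wsumE : wsum l = (\sum_(t <- rs) (k t)%:R)%R by rewrite /wsum big_map.
have wsum_le : (wsum l <= M%:R * P)%R.
  by rewrite wsumE mulr_sumr; apply: ler_sum => t _; case/andP: (kP t).
have wsum_ge : (M%:R * P - n%:R <= wsum l)%R.
  rewrite wsumE mulr_sumr /n -sum1_size natr_sum -sumrB; apply: ler_sum => t _.
  by case/andP: (kP t) => _; lra.
have MP : (M%:R * (1 - eta) < M%:R * P)%R by rewrite ltr_pM2l //; lra.
have PM : (M%:R * P <= M%:R)%R by rewrite ler_piMr // ltW.
have wsum_M : (1 - 2 * eta < wsum l / M%:R)%R by rewrite ltr_pdivlMr //; lra.
have wsum0 : (0 < wsum l)%R.
  have : (0 < wsum l / M%:R)%R by lra.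
  by rewrite pmulr_lgt0 ?invr_gt0.
have bound : (\sum_(t <- rs) `|(k t)%:R / wsum l - p t| <=
    (1 - wsum l / M%:R) + (P - wsum l / M%:R))%R.
  rewrite wsumE; apply: sum_dist_normalized_le => [t|t|].
  - by rewrite ler0n.
  - by case/andP: (kP t).
  - by rewrite -wsumE wsum0 /=; lra.
by split => //; rewrite ell1_dist_lmass_seq // lte_fin -/P; lra.
Qed.

End EncodedMeasure.

Lemma is_prob_lmass (G : groupType) (dec : nat -> G) l :
  (0 < wsum l)%R -> is_prob (lmass dec l).
Proof.
move=> l0; split; first exact: lmass_ge0.
rewrite esum_lmass; congr EFin; rewrite -[RHS](sum_lweight l0).
by apply: eq_bigr => e _; rewrite asboolT // mulr1.
Qed.

Lemma ell1_dist_pushforward_le (T Y : choiceType) (p q : T -> RR) (f : T -> Y) :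
  is_prob p -> is_prob q ->
  ell1_dist (pushforward p f) (pushforward q f) <=
  ell1_dist (fun t => (p t)%:E) (fun t => (q t)%:E).
Proof.
move=> pp qq; rewrite !pushforwardE; apply: ell1_dist_fibersum_le.
- by move=> t; rewrite lee_fin pp.1.
- by move=> t; rewrite lee_fin qq.1.
- by move=> y; exact: (pushforward_fin_num f y pp).
- by move=> y; exact: (pushforward_fin_num f y qq).
Qed.

(* Junk value 0 when P never holds. *)
Definition least_index (P : nat -> Prop) : nat :=
  if pselect (exists n, P n) is left e then ex_minn (P := fun n => `[< P n >])
    (let: ex_intro n Pn := e in ex_intro _ n (asboolT Pn)) else 0.

Lemma least_indexP (P : nat -> Prop) : (exists n, P n) ->
  P (least_index P) /\ forall n, P n -> (least_index P <= n)%N.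
Proof.
move=> ex; rewrite /least_index; case: pselect => [[n0 Pn0]|] //=.
by case: ex_minnP => n /asboolP Pn minP; split => // m /asboolT /minP.
Qed.

Lemma least_index_eq (P : nat -> Prop) n : (exists m, P m) ->
  least_index P = n <-> P n /\ forall m, (m < n)%N -> ~ P m.
Proof.
move=> /least_indexP [Pl le_min]; split => [<-|[Pn minP]].
  by split => // m lt_m /le_min; rewrite leqNgt lt_m.
apply/eqP; rewrite eqn_leq le_min //=; rewrite leqNgt; apply/negP => lt_l.
exact: minP _ lt_l Pl.
Qed.

Definition tolerance (i : nat) : RR := (i.+1%:R)^-1%R.

Lemma tolerance_gt0 i : (0 < tolerance i)%R.
Proof. by rewrite invr_gt0 ltr0n. Qed.

Lemma tolerance_nonincreasing i j : (i <= j)%N -> (tolerance j <= tolerance i)%R.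
Proof. by move=> ij; rewrite lef_pV2 ?posrE ?ltr0n // ler_nat ltnS. Qed.

Lemma tolerance_lt (eps : RR) : (0 < eps)%R -> exists N, (tolerance N < eps)%R.
Proof.
move=> eps0; exists (Num.truncn eps^-1).
rewrite /tolerance -[X in (_ < X)%R]invrK ltf_pV2 ?posrE ?invr_gt0 ?ltr0n //.
exact: truncnS_gt.
Qed.

Definition decode_list (n : nat) : seq (nat * nat) := odflt [::] (unpickle n).

Section OrbitMeasure.
Local Open Scope group_scope.
Variables (G : groupType) (dec : nat -> G).
Variables (X : choiceType) (act : G -> X -> X).
Hypothesis act1 : forall x, act 1 x = x.
Hypothesis actM : forall g h x, act (g * h) x = act g (act h x).

Definition lpush (l : seq (nat * nat)) (z w : X) : RR :=
  (\sum_(e <- l) lweight l e * (act (dec e.1) z == w)%:R)%R.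

Lemma lpush_ge0 l z w : (0 <= lpush l z w)%R.
Proof. by apply: sumr_ge0 => e _; rewrite mulr_ge0 ?lweight_ge0 ?ler0n. Qed.

Lemma lpushE l z : (fun w => (lpush l z w)%:E) = pushforward (lmass dec l) (fun g => act g z).
Proof.
apply: funext => w; rewrite /pushforward esum_lmass; congr EFin.
apply: eq_bigr => e _; congr (_ * _%:R)%R.
by rewrite /preimage /=; case: eqP => [->|ne]; [rewrite asboolT | rewrite asboolF].
Qed.

Lemma lpush_out l z w : w \notin [seq act (dec e.1) z | e <- l] -> lpush l z w = 0%R.
Proof.
move=> out; rewrite /lpush big1_seq // => e el.
case: eqP => [hw|_]; last by rewrite mulr0.
by rewrite -hw map_f in out.
Qed.

Lemma esum_lpush_orbit l z : (0 < wsum l)%R ->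
  \esum_(w in [set w | exists g, act g z = w]) (lpush l z w)%:E = 1%E.
Proof.
move=> l0; rewrite (eq_esum (fun w _ => congr1 (fun f => f w) (lpushE l z))).
rewrite pushforwardE esum_fibersum => [|g]; last by rewrite lee_fin lmass_ge0.
rewrite (_ : _ @^-1` _ = [set: G]); last by apply/seteqP; split => g //= _; exists g.
by case: (is_prob_lmass dec l0).
Qed.

Definition ldisp (l : seq (nat * nat)) (z : X) (s : G) : \bar RR :=
  ell1_dist (fun w => (lpush l z w)%:E) (fun w => (lpush l (act s z) w)%:E).

Definition ldisp_maps (l : seq (nat * nat)) (s : G) : seq (X -> X) :=
  [seq act (dec e.1) | e <- l] ++ [seq act (dec e.1) \o act s | e <- l].

(* The l^1 distance as a finite sum, from which measurability in z follows. *)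
Lemma ldispE l z s : ldisp l z s =
  (\sum_(w <- undup [seq u z | u <- ldisp_maps l s])
     `|lpush l z w - lpush l (act s z) w|)%R%:E.
Proof.
rewrite /ldisp /ell1_dist; under eq_esum do rewrite -EFinB abse_EFin.
rewrite (esum_finite_support (s := [seq u z | u <- ldisp_maps l s])) => [|w|w].
- by rewrite sumEFin.
- by rewrite lee_fin.
rewrite map_cat mem_cat negb_or -!map_comp => /andP[out1 out2].
by rewrite !lpush_out ?subr0 ?normr0.
Qed.

(* Being uniform over the orbit of x, this condition is orbit invariant. *)
Definition good (i : nat) (l : seq (nat * nat)) (x : X) : Prop :=
  (0 < wsum l)%R /\ forall g j, (j <= i)%N -> ldisp l (act g x) (dec j) < (tolerance i)%:E.

Lemma good_act i l x h : good i l (act h x) <-> good i l x.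
Proof.
split=> -[l0 small]; split => // g j ji.
  by rewrite -[x]act1 -(mulVg h) actM -actM; apply: small.
by rewrite -actM; apply: small.
Qed.

Definition good_index (i : nat) (x : X) : nat :=
  least_index (fun n => good i (decode_list n) x).

Lemma good_index_act i x h : good_index i (act h x) = good_index i x.
Proof.
rewrite /good_index (_ : (fun n => _) = (fun n => good i (decode_list n) x)) //.
by apply: funext => n; apply/propext/good_act.
Qed.

End OrbitMeasure.

Lemma exists_good (G : groupType) (enc : G -> nat) (dec : nat -> G) (X : choiceType)
    (act : G -> X -> X) :
  cancel enc dec -> (forall x, act 1%g x = x) ->
  (forall g h x, act (g * h)%g x = act g (act h x)) ->
  (forall x, uniformly_coamenable (stabilizer act x)) ->
  forall i x, exists n, good dec act i (decode_list n) x.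
Proof.
move=> encK act1 actM hstab i x; pose S := [set dec j | j in `I_i.+1].
have finS : finite_set S by apply: finite_image; exact: finite_II.
pose e := (tolerance i / 3)%R; have e0 : (0 < e)%R by rewrite divr_gt0 ?tolerance_gt0.
have [p [pp reiter]] := hstab x S finS _ (RltP e0).
have [l [l0 approx]] := lmass_approx encK pp e0.
exists (pickle l); rewrite /decode_list pickleK /=; split => // g j ji.
have pl := is_prob_lmass dec l0.
set z := act g x; rewrite /ldisp !lpushE.
have fin a w : pushforward p (fun h => act h a) w \is a fin_num by exact: pushforward_fin_num.
apply: le_lt_trans (ell1_dist_triangle _ _ (fin z)) _.
apply: le_lt_trans (leeD (lexx _) (ell1_dist_triangle _ _ (fin (act (dec j) z)))) _.
have -> : (tolerance i)%:E = e%:E + (e%:E + e%:E) by rewrite -!EFinD /e; congr EFin; lra.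
apply: lteD; first exact: le_lt_trans (ell1_dist_pushforward_le _ pl pp) approx.
apply: lteD.
  apply: le_lt_trans (ell1_dist_orbit_le_coset act1 actM x g (dec j) pp) _.
  by apply: reiter; [exists j | exists g].
rewrite ell1_dist_EFinC in approx.
exact: le_lt_trans (ell1_dist_pushforward_le _ pp pl) approx.
Qed.

Lemma measurable_fun_natr_bool (d : measure_display) (T : measurableType d) (h : T -> bool) :
  measurable_fun [set: T] h -> measurable_fun [set: T] (fun t => (h t)%:R : RR).
Proof.
move=> mh; rewrite (_ : (fun t => _) = fun t => if h t then 1%R else 0%R).
  by apply: measurable_fun_if.
by apply: funext => t; case: (h t).
Qed.

Section Measurability.
Local Open Scope group_scope.
Variables (G : groupType) (enc : G -> nat) (dec : nat -> G).
Hypothesis encK : cancel enc dec.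
Variables (d : measure_display) (X : measurableType d) (act : G -> X -> X).
(* A Borel injection into the reals, only used to make the diagonal of X Borel. *)
Variable f : X -> RR.
Hypothesis f_inj : injective f.
Hypothesis f_meas : measurable_fun [set: X] f.
Hypothesis act_meas : forall g, measurable_fun [set: X] (act g).

Lemma measurable_fun_eq_pt (d' : measure_display) (T : measurableType d') (u v : T -> X) :
  measurable_fun [set: T] u -> measurable_fun [set: T] v ->
  measurable_fun [set: T] (fun t => u t == v t).
Proof.
move=> mu mv; under eq_fun do rewrite -(inj_eq f_inj).
by apply: measurable_fun_eqr; exact: measurableT_comp.
Qed.

Lemma measurable_lpush (d' : measure_display) (T : measurableType d') l (u v : T -> X) :
  measurable_fun [set: T] u -> measurable_fun [set: T] v ->
  measurable_fun [set: T] (fun t => lpush dec act l (u t) (v t)).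
Proof.
move=> mu mv; apply: measurable_sum => e; apply: measurable_funM => //.
apply/measurable_fun_natr_bool/measurable_fun_eq_pt => //.
exact: measurableT_comp (act_meas _) mu.
Qed.

Lemma measurable_fun_in_map (u : X -> X) (vs : seq (X -> X)) :
  measurable_fun [set: X] u -> (forall v, v \in vs -> measurable_fun [set: X] v) ->
  measurable_fun [set: X] (fun z => u z \in [seq v z | v <- vs]).
Proof.
move=> mu; elim: vs => [|v vs IH] mvs /=.
  by under eq_fun do rewrite in_nil; exact: measurable_cst.
under eq_fun do rewrite inE.
apply: measurable_or; first by apply: measurable_fun_eq_pt => //; apply: mvs; rewrite mem_head.
by apply: IH => w wvs; apply: mvs; rewrite inE wvs orbT.
Qed.

Lemma measurable_sum_undup (us : seq (X -> X)) (Phi : X -> X -> RR) :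
  (forall u, u \in us -> measurable_fun [set: X] u) ->
  (forall u, measurable_fun [set: X] u -> measurable_fun [set: X] (fun z => Phi z (u z))) ->
  measurable_fun [set: X] (fun z => \sum_(w <- undup [seq u z | u <- us]) Phi z w)%R.
Proof.
move=> mus mPhi; elim: us mus => [|u us IH] mus /=.
  by under eq_fun do rewrite big_nil; exact: measurable_cst.
have mu : measurable_fun [set: X] u by apply: mus; rewrite mem_head.
have mus' v : v \in us -> measurable_fun [set: X] v.
  by move=> vus; apply: mus; rewrite inE vus orbT.
rewrite (_ : (fun z => _) = fun z =>
    ((u z \notin [seq v z | v <- us])%:R * Phi z (u z) +
     \sum_(w <- undup [seq v z | v <- us]) Phi z w)%R).
  apply: measurable_funD; last exact: IH.
  apply: measurable_funM; last exact: mPhi.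
  by apply/measurable_fun_natr_bool/measurable_neg/measurable_fun_in_map.
apply: funext => z; case: ifP => uz /=; first by rewrite mul0r add0r.
by rewrite big_cons mul1r.
Qed.

Lemma measurable_ldisp_lt l s (c : RR) : measurable [set z | ldisp dec act l z s < c%:E].
Proof.
have mD : measurable_fun [set: X] (fun z =>
    \sum_(w <- undup [seq u z | u <- ldisp_maps dec act l s])
      `|lpush dec act l z w - lpush dec act l (act s z) w|)%R.
  apply: measurable_sum_undup => [u|u mu].
    rewrite mem_cat => /orP[] /mapP[e _ ->]; first exact: act_meas.
    exact: measurableT_comp (act_meas _) (act_meas _).
  apply: measurableT_comp; first exact: normr_measurable.
  by apply: measurable_funB; apply: measurable_lpush => //; exact: act_meas.
have := measurable_fun_ltr mD (measurable_cst c) measurableT (I : measurable [set true]).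
by rewrite setTI; congr measurable; apply/seteqP; split => z /=; rewrite ldispE lte_fin.
Qed.

Lemma measurable_good i l : measurable [set x | good dec act i l x].
Proof.
have [l0|l0] := ltrP 0%R (wsum l); last first.
  rewrite (_ : [set x | _] = set0) //; apply/seteqP; split => x // [/lt_le_trans /(_ l0)].
  by rewrite ltxx.
rewrite (_ : [set x | _] = \bigcap_m \bigcap_(j in `I_i.+1)
    act (dec m) @^-1` [set z | ldisp dec act l z (dec j) < (tolerance i)%:E]).
  apply: bigcapT_measurable => m; apply: bigcap_measurableType => j _.
  by rewrite -[_ @^-1` _]setTI; apply: act_meas => //; exact: measurable_ldisp_lt.
apply/seteqP; split => x /=.
  by move=> [_ small] m _ j /= ji; exact: small.
by move=> small; split => // g j ji; rewrite -[g]encK; exact: small.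
Qed.

Hypothesis good_exists : forall i x, exists n, good dec act i (decode_list n) x.

Lemma measurable_good_index i n : measurable [set x | good_index dec act i x = n].
Proof.
rewrite (_ : [set x | _] = [set x | good dec act i (decode_list n) x] `&`
    \bigcap_(m in `I_n) ~` [set x | good dec act i (decode_list m) x]).
  apply: measurableI; first exact: measurable_good.
  by apply: bigcap_measurableType => m _; apply: measurableC; exact: measurable_good.
apply/seteqP; split => x /=.
  by move/least_index_eq => /(_ (good_exists i x)) [gn below]; split => // m; exact: below.
by move=> [gn below]; apply/least_index_eq => //; split => // m; exact: below.
Qed.

Lemma measurable_lpush_good_index (E : set (X * X)) i :
  measurable_fun E (fun xy : X * X =>
    lpush dec act (decode_list (good_index dec act i xy.1)) xy.1 xy.2).
Proof.
move=> mE Y mY.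
rewrite (_ : _ `&` _ = \bigcup_n (E `&` ([set x | good_index dec act i x = n] `*` setT) `&`
    ((fun xy : X * X => lpush dec act (decode_list n) xy.1 xy.2) @^-1` Y))).
  apply: bigcupT_measurable => n; apply: measurableI.
    by apply: measurableI => //; apply: measurableX => //; exact: measurable_good_index.
  by rewrite -[_ @^-1` _]setTI; apply: measurable_lpush.
apply/seteqP; split => [[x y] /= [Exy Yxy]|[x y] [n _ [[Exy [/= <- _]] Yxy]]] //.
by exists (good_index dec act i x).
Qed.

End Measurability.

Lemma countable_cancel (T : choiceType) (t0 : T) : countable [set: T] ->
  exists enc : T -> nat, exists dec : nat -> T, cancel enc dec.
Proof.
move=> /countable_injP [enc encI]; exists enc, (fun n => xget t0 [set t | enc t = n]).
move=> t; have : [set u | enc u = enc t] (xget t0 [set u | enc u = enc t]) by apply: xgetI.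
by move/encI; apply; rewrite in_setT.
Qed.

Theorem lemma4p4 (G : groupType) (G_countable : countable [set: G])
    (d : measure_display) (X : measurableType d) (X_std : standard_borel X)
    (act : G -> X -> X) (act_borel : borel_action act)
    (hstab : forall x : X, uniformly_coamenable (stabilizer act x)) :
  borel_amenable (orbit_eqrel act).
Proof.
have [enc [dec encK]] := countable_cancel 1%g G_countable.
case: act_borel => act1 [actM act_meas]; case: X_std => f [f_inj [f_meas _]].
have good_ex := exists_good encK act1 actM hstab.
pose L i x := decode_list (good_index dec act i x).
exists (fun i x => lpush dec act (L i x) x); split; [|split].
- move=> i x; have [[l0 _] _] := least_indexP (good_ex i x); split; [|split].
  + by move=> y; exact: lpush_ge0.
  + by move=> y nE; apply: lpush_out; apply/mapP => -[e _ ye]; apply: nE; exists (dec e.1).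
  + exact: esum_lpush_orbit.
- move=> x _ [h /= <-] eps eps0; have [N epsN] := tolerance_lt eps0.
  exists (maxn N (enc h)); move=> i; rewrite geq_max => /andP[Ni hi].
  rewrite /L good_index_act //; have [[_ small] _] := least_indexP (good_ex i x).
  have := small 1%g (enc h) hi; rewrite act1 encK => /lt_le_trans; apply.
  by rewrite lee_fin (le_trans (tolerance_nonincreasing Ni)) ?ltW.
- by move=> i; exact: (measurable_lpush_good_index encK f_inj f_meas act_meas good_ex).
Qed.
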